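(* Let $G=(V,E)$ be a cactus. If $X,Y\subseteq V$ are such that $\mathbf v(X)$ and $\mathbf v(Y)$ are distinct and adjacent vertices of $\mathrm{CUT}(G)$ (i.e. joined by an edge of the 1-skeleton of $\mathrm{CUT}(G)$), then $|\delta(X\triangle Y)|\le 2$.
   Context: For an undirected graph $G=(V,E)$ and $S\subseteq V$, $\delta(S)\subseteq E$ denotes the set of edges with exactly one endpoint in $S$, and $\mathbf v(S)\in\{0,1\}^{E}$ is its incidence vector ($v(S)_e=1$ iff $e\in\delta(S)$). The cut polytope is $\mathrm{CUT}(G)=\operatorname{conv}\{\mathbf v(S):S\subseteq V\}\subset\mathbb R^{E}$. The 1-skeleton of a polytope is the graph whose vertices are the polytope's vertices and whose edges are its one-dimensional faces. $X\triangle Y$ denotes symmetric difference. A cactus is a connected graph in which every edge belongs to at most one simple cycle. *)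

From HB Require Import structures.
From mathcomp Require Import all_boot all_order all_algebra.
From mathcomp Require Import reals.
Set Implicit Arguments. Unset Strict Implicit. Unset Printing Implicit Defensive.
Import Order.TTheory GRing.Theory Num.Theory.
Local Open Scope ring_scope.

Definition simple_graph (V : finType) (E : {set {set V}}) : Prop :=
  forall f, f \in E -> #|f| = 2%N.

Definition adj (V : finType) (E : {set {set V}}) : rel V :=
  fun u v => [set u; v] \in E.

Definition connected_graph (V : finType) (E : {set {set V}}) : Prop :=
  forall u v : V, connect (adj E) u v.

Definition simple_cycle (V : finType) (E : {set {set V}}) (s : seq V) : Prop :=
  [/\ (3 <= size s)%N, uniq s & cycle (adj E) s].

Definition cycle_edges (V : finType) (s : seq V) : {set {set V}} :=
  [set [set x; next s x] | x in s].

Definition cactus (V : finType) (E : {set {set V}}) : Prop :=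
  connected_graph E /\
  forall f, f \in E -> forall s1 s2, simple_cycle E s1 -> simple_cycle E s2 ->
    f \in cycle_edges s1 -> f \in cycle_edges s2 -> cycle_edges s1 = cycle_edges s2.

(* The coordinate index set E, as a finite type. *)
Definition edge (V : finType) (E : {set {set V}}) := {f : {set V} | f \in E}.

Definition delta (V : finType) (E : {set {set V}}) (S : {set V}) : {set {set V}} :=
  [set f in E | #|f :&: S| == 1%N].

Definition cutvec (R : realType) (V : finType) (E : {set {set V}}) (S : {set V})
  : edge E -> R := fun f => (val f \in delta E S)%:R.
Arguments cutvec R {V} E S _.

Definition dotp (R : realType) (V : finType) (E : {set {set V}}) (c x : edge E -> R) : R :=
  \sum_(f : edge E) c f * x f.

(* CUT(G) = conv { v(S) : S subset V } *)
Definition CUT (R : realType) (V : finType) (E : {set {set V}}) (x : edge E -> R) : Prop :=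
  exists lam : {set V} -> R,
    [/\ forall S, 0 <= lam S, \sum_(S : {set V}) lam S = 1 &
        forall f, x f = \sum_(S : {set V}) lam S * cutvec R E S f].

Definition is_face (R : realType) (V : finType) (E : {set {set V}})
  (P F : (edge E -> R) -> Prop) : Prop :=
  exists (c : edge E -> R) (c0 : R),
    (forall x, P x -> dotp c x <= c0) /\
    (forall x, F x <-> (P x /\ dotp c x = c0)).

Definition segment (R : realType) (V : finType) (E : {set {set V}}) (u v : edge E -> R)
  : (edge E -> R) -> Prop :=
  fun x => exists t : R, [/\ 0 <= t, t <= 1 & forall f, x f = t * u f + (1 - t) * v f].

(* u and v are distinct vertices joined by an edge (1-dimensional face) of P:
   a 1-dimensional face of a polytope is the segment between its two vertices. *)
Definition skeleton_adjacent (R : realType) (V : finType) (E : {set {set V}})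
  (P : (edge E -> R) -> Prop) (u v : edge E -> R) : Prop :=
  u <> v /\ is_face P (segment u v).

Definition symdiff (V : finType) (X Y : {set V}) : {set V} := (X :\: Y) :|: (Y :\: X).

From HB Require Import structures.
From mathcomp Require Import all_boot all_order all_algebra.
From mathcomp Require Import reals.
From mathcomp Require Import ring lra.
Set Implicit Arguments. Unset Strict Implicit. Unset Printing Implicit Defensive.
Import Order.TTheory GRing.Theory Num.Theory.
Local Open Scope ring_scope.

(* Let Z = X Δ Y. If a vertex set W has delta W nonempty and contained in
   delta Z, then v(X Δ W) + v(Y Δ W) = v(X) + v(Y) coordinatewise, so the
   inequality supporting the edge [v(X), v(Y)] of CUT(G) is tight at v(X Δ W);
   thus v(X Δ W) is v(X) or v(Y), which forces delta W = delta Z. Applied to the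
   components W of G - delta Z: a component meeting delta Z meets all of it. If
   delta Z had three edges e1, e2, e3, paths inside these components would close
   e1 with e2, and e1 with e3, into simple cycles through e1 with different edge
   sets, which a cactus forbids. *)

Lemma in_symdiff (T : finType) (A B : {set T}) x :
  (x \in symdiff A B) = (x \in A) (+) (x \in B).
Proof. by rewrite !inE; case: (x \in A); case: (x \in B). Qed.

Lemma card_set2I (T : finType) (x y : T) (S : {set T}) : x != y ->
  #|[set x; y] :&: S| = ((x \in S) + (y \in S))%N.
Proof.
move=> xy; have -> : #|[set x; y] :&: S| = #|[seq v <- [:: x; y] | v \in S]|.
  by apply: eq_card => v; rewrite !inE mem_filter !inE andbC.
rewrite (card_uniqP _) ?filter_uniq /= ?inE ?andbT //.
by case: (x \in S); case: (y \in S).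
Qed.

Section Cuts.
Variables (V : finType) (E : {set {set V}}).
Hypothesis HG : simple_graph E.

Lemma delta_pair (S : {set V}) x y :
  ([set x; y] \in delta E S) = adj E x y && ((x \in S) (+) (y \in S)).
Proof.
rewrite /delta inE /adj; case: (eqVneq x y) => [<-|xy].
  rewrite addbb andbF setUid; apply/negbTE/negP => /andP[/HG].
  by rewrite cards1.
by rewrite card_set2I //; congr andb; case: (x \in S); case: (y \in S).
Qed.

Lemma delta_orient (S : {set V}) f : f \in delta E S ->
  exists z w, [/\ z \in S, w \notin S, adj E z w & f = [set z; w]].
Proof.
move=> fS; have /HG/eqP/cards2P[x [y [_ ef]]] : f \in E by case/setIdP: fS.
move: fS; rewrite ef delta_pair => /andP[xy].
case xS: (x \in S); case yS: (y \in S) => //= _.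
- by exists x, y; rewrite xS yS.
- by exists y, x; rewrite xS yS setUC /adj setUC.
Qed.

Lemma delta_symdiff (S T : {set V}) :
  delta E (symdiff S T) = symdiff (delta E S) (delta E T).
Proof.
apply/setP => f; rewrite in_symdiff.
case fE: (f \in E); last by rewrite !inE fE.
have /eqP/cards2P[x [y [_ ->]]] := HG fE.
by rewrite !delta_pair !in_symdiff; case: adj; rewrite //= addbACA.
Qed.

End Cuts.

Lemma natr_bool_inj (R : numDomainType) (b c : bool) : (b%:R : R) = c%:R -> b = c.
Proof. by move/eqP; rewrite eqr_nat; case: b; case: c. Qed.

Lemma bool_convex_endpoint (R : realFieldType) (I : finType) (u v x : I -> bool) (t : R) :
  (forall i, (x i)%:R = t * (u i)%:R + (1 - t) * (v i)%:R) -> x =1 u \/ x =1 v.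
Proof.
move=> Hx; have [uv|] := boolP [forall i, u i == v i].
  left=> i; apply: (@natr_bool_inj R); rewrite Hx (eqP (forallP uv i)); ring.
rewrite negb_forall => /existsP[i0 uv0].
have [t1|t0] : t = 1 \/ t = 0.
  by move: uv0 (Hx i0); case: (u i0); case: (v i0); case: (x i0) => //= _; lra.
- by left=> i; apply: (@natr_bool_inj R); rewrite Hx t1; ring.
- by right=> i; apply: (@natr_bool_inj R); rewrite Hx t0; ring.
Qed.

Section CutPolytope.
Variables (R : realType) (V : finType) (E : {set {set V}}).
Hypothesis HG : simple_graph E.

Lemma CUT_cutvec S : CUT (cutvec R E S).
Proof.
exists (fun T => (T == S)%:R); split=> [T | | f]; first by rewrite ler0n.
  by rewrite (bigD1 S) //= eqxx big1 ?addr0 // => T /negbTE ->.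
rewrite (bigD1 S) //= eqxx mul1r big1 ?addr0 // => T /negbTE ->.
by rewrite mul0r.
Qed.

Lemma delta_eq_on_edges (S T : {set V}) :
  (forall f : edge E, (val f \in delta E S) = (val f \in delta E T)) ->
  delta E S = delta E T.
Proof.
move=> eqST; apply/setP => f; case fE: (f \in E); first exact: (eqST (exist _ f fE)).
by rewrite !inE fE.
Qed.

Lemma adjacent_cut_face X Y :
  skeleton_adjacent (@CUT R V E) (cutvec R E X) (cutvec R E Y) ->
  exists c c0, [/\ forall S, dotp c (cutvec R E S) <= c0,
    dotp c (cutvec R E X) = c0, dotp c (cutvec R E Y) = c0 &
    forall S, dotp c (cutvec R E S) = c0 ->
      delta E S = delta E X \/ delta E S = delta E Y].
Proof.
move=> [_ [c [c0 [le_c0 face]]]]; exists c, c0; split.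
- by move=> S; apply/le_c0/CUT_cutvec.
- apply: (proj1 (face _) _).2; exists 1; split=> // f; ring.
- apply: (proj1 (face _) _).2; exists 0; split=> // f; ring.
move=> S cS; have [t [_ _ Ht]] := proj2 (face _) (conj (CUT_cutvec S) cS).
have [] := @bool_convex_endpoint R _ (fun f => val f \in delta E X)
  (fun f => val f \in delta E Y) (fun f => val f \in delta E S) t Ht.
- by left; apply: delta_eq_on_edges.
- by right; apply: delta_eq_on_edges.
Qed.

Lemma delta_sub_symdiff X Y W :
  skeleton_adjacent (@CUT R V E) (cutvec R E X) (cutvec R E Y) ->
  {subset delta E W <= delta E (symdiff X Y)} ->
  delta E W = set0 \/ delta E W = delta E (symdiff X Y).
Proof.
move=> adjXY subW; have [c [c0 [le_c0 cX cY eq_c0]]] := adjacent_cut_face adjXY.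
have sum_eq : dotp c (cutvec R E (symdiff X W)) + dotp c (cutvec R E (symdiff Y W))
            = dotp c (cutvec R E X) + dotp c (cutvec R E Y).
  rewrite /dotp -!big_split; apply: eq_bigr => f _ /=; rewrite -!mulrDr; congr (_ * _).
  have := subW (val f); rewrite /cutvec !(delta_symdiff HG) !in_symdiff => /implyP.
  by case: (val f \in delta E X); case: (val f \in delta E Y);
    case: (val f \in delta E W); rewrite //= addrC.
have [] := eq_c0 (symdiff X W).
- by have := le_c0 (symdiff X W); have := le_c0 (symdiff Y W); lra.
- rewrite (delta_symdiff HG) => /setP eqXW; left; apply/setP => f.
  move: (eqXW f); rewrite in_symdiff in_set0.
  by case: (f \in delta E X); case: (f \in delta E W).
- rewrite !(delta_symdiff HG) => /setP eqYW; right; apply/setP => f.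
  move: (eqYW f); rewrite !in_symdiff.
  by case: (f \in delta E X); case: (f \in delta E Y); case: (f \in delta E W).
Qed.

End CutPolytope.

Lemma connect_uniq_path (T : finType) (e : rel T) x y : connect e x y ->
  exists p, [/\ path e x p, last x p = y & uniq (x :: p)].
Proof. by case/connectP=> p /shortenP[p' ? ? _] ->; exists p'. Qed.

Lemma cycle_edges_rot (T : finType) n (s : seq T) :
  uniq s -> cycle_edges (rot n s) = cycle_edges s.
Proof.
move=> us; apply/setP => f; apply/imsetP/imsetP => -[x xs ->];
  by exists x; rewrite ?mem_rot ?(next_rot n us) // -(mem_rot n).
Qed.

Lemma last_head_cycle_edges (T : finType) x (s : seq T) :
  uniq (x :: s) -> [set last x s; x] \in cycle_edges (x :: s).
Proof.
move=> us; apply/imsetP; exists (last x s); first exact: mem_last.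
by rewrite next_nth mem_last (index_last us) nth_default.
Qed.

Definition side_adj (V : finType) (E : {set {set V}}) (Z : {set V}) : rel V :=
  fun x y => adj E x y && ((x \in Z) == (y \in Z)).

Definition side_comp (V : finType) (E : {set {set V}}) (Z : {set V}) (a : V) : {set V} :=
  [set v | connect (side_adj E Z) a v].

Section SideComponents.
Variables (V : finType) (E : {set {set V}}).
Hypothesis HG : simple_graph E.
Variable Z : {set V}.

Lemma connect_side_mem x y : connect (side_adj E Z) x y -> (x \in Z) = (y \in Z).
Proof.
by case/connectP=> p + ->; elim: p x => //= v p IHp x /andP[/andP[_ /eqP->] /IHp].
Qed.

Lemma delta_side_comp_sub a : {subset delta E (side_comp E Z a) <= delta E Z}.
Proof.
move=> _ /(delta_orient HG)[x [y [xa ya xy ->]]].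
rewrite (delta_pair HG) xy /=; apply: contraNT ya => sameZ; rewrite !inE in xa *.
apply: connect_trans xa (connect1 _); rewrite /side_adj xy.
by move: sameZ; case: (x \in Z); case: (y \in Z).
Qed.

Lemma delta_side_comp_crossing a z w : z \in Z -> w \notin Z ->
  ([set z; w] \in delta E (side_comp E Z a)) =
  adj E z w && connect (side_adj E Z) a (if a \in Z then z else w).
Proof.
move=> zZ wZ; rewrite (delta_pair HG) !inE; congr andb.
move: (@connect_side_mem a z) (@connect_side_mem a w); rewrite zZ (negbTE wZ).
case: (a \in Z) => haz haw.
- by case: (connect _ a w) haw => [/(_ isT)//|]; rewrite addbF.
- by case: (connect _ a z) haz => [/(_ isT)//|]; rewrite addFb.
Qed.

Lemma crossing_edges_side_connect z w z' w' :
  (forall a, delta E (side_comp E Z a) = set0 \/ delta E (side_comp E Z a) = delta E Z) ->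
  z \in Z -> w \notin Z -> adj E z w -> z' \in Z -> w' \notin Z -> adj E z' w' ->
  connect (side_adj E Z) z z' /\ connect (side_adj E Z) w' w.
Proof.
move=> full zZ wZ zw z'Z w'Z z'w'.
have [e e'] : [set z; w] \in delta E Z /\ [set z'; w'] \in delta E Z.
  by rewrite !(delta_pair HG) zw z'w' zZ z'Z (negbTE wZ) (negbTE w'Z).
have e_z : [set z; w] \in delta E (side_comp E Z z).
  by rewrite delta_side_comp_crossing // zZ zw connect0.
have e'_w' : [set z'; w'] \in delta E (side_comp E Z w').
  by rewrite delta_side_comp_crossing // (negbTE w'Z) z'w' connect0.
split.
- have [e0|ez] := full z; first by rewrite e0 in_set0 in e_z.
  by move: e'; rewrite -ez delta_side_comp_crossing // zZ => /andP[].
- have [e0|ew'] := full w'; first by rewrite e0 in_set0 in e'_w'.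
  by move: e; rewrite -ew' delta_side_comp_crossing // (negbTE w'Z) => /andP[].
Qed.

Lemma cycle_edges_delta_sub (F : {set {set V}}) s :
  cycle (fun x y => adj E x y && (([set x; y] \in delta E Z) ==> ([set x; y] \in F))) s ->
  cycle_edges s :&: delta E Z \subset F.
Proof.
move=> cs; apply/subsetP => _ /setIP[/imsetP[x xs ->]].
by case/andP: (next_cycle cs xs) => _ /implyP.
Qed.

Lemma crossing_pair_cycle z w z' w' :
  z \in Z -> w \notin Z -> adj E z w -> adj E z' w' -> [set z; w] != [set z'; w'] ->
  connect (side_adj E Z) z z' -> connect (side_adj E Z) w' w ->
  exists s, simple_cycle E s /\ cycle_edges s :&: delta E Z = [set [set z; w]; [set z'; w']].
Proof.
move=> zZ wZ zw z'w' ne /[dup] zz' /connect_uniq_path[p [hp lp up]].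
move=> /[dup] w'w /connect_uniq_path[q [hq lq uq]].
have pZ : {subset z :: p <= Z}.
  by move=> v /(path_connect hp)/connect_side_mem; rewrite zZ => <-.
have qZ : {subset w' :: q <= [predC Z]}.
  by move=> v /(path_connect hq)/connect_side_mem; rewrite !inE (connect_side_mem w'w) => <-.
have z'Z : z' \in Z by rewrite -(connect_side_mem zz').
have w'Z : w' \notin Z by rewrite (connect_side_mem w'w).
pose s := z :: p ++ w' :: q.
have us : uniq s.
  rewrite /s -cat_cons cat_uniq up uq andbT andTb; apply/hasPn => v /qZ.
  by apply: contraTN => /pZ; rewrite inE => ->.
have sz : (2 < size s)%N.
  rewrite /s /= size_cat /= addnS !ltnS lt0n addn_eq0; apply: contra ne.
  by case/andP=> /nilP p0 /nilP q0; move: lp lq; rewrite p0 q0 /= => <- ->.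
pose r x y := adj E x y &&
  (([set x; y] \in delta E Z) ==> ([set x; y] \in [set [set z; w]; [set z'; w']])).
have side_r : subrel (side_adj E Z) r.
  move=> x y /andP[xy sameZ]; rewrite /r (delta_pair HG) xy /=.
  by move: sameZ; case: (x \in Z); case: (y \in Z).
have cs : cycle r s.
  rewrite /s /= rcons_cat /= cat_path (sub_path side_r hp) lp /=.
  rewrite rcons_path (sub_path side_r hq) lq /r z'w' /adj (setUC [set w]).
  by rewrite (zw : [set z; w] \in E) !in_set2 !eqxx orbT !implybT.
have e_cyc : [set z; w] \in cycle_edges s.
  by have := last_head_cycle_edges us; rewrite last_cat /= lq setUC.
have e'_cyc : [set z'; w'] \in cycle_edges s.
  have ur : uniq (w' :: q ++ z :: p) by rewrite -cat_cons -rot_size_cat rot_uniq.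
  rewrite -(cycle_edges_rot (size (z :: p)) us) /s -cat_cons rot_size_cat /=.
  by have := last_head_cycle_edges ur; rewrite last_cat /= lp.
exists s; split; first by split=> //; apply: sub_cycle cs => x y /andP[].
apply/eqP; rewrite eqEsubset (cycle_edges_delta_sub cs) /=.
apply/subsetP => f; rewrite in_set2 => /orP[]/eqP->; rewrite in_setI (delta_pair HG).
- by rewrite e_cyc zw zZ (negbTE wZ).
- by rewrite e'_cyc z'w' z'Z (negbTE w'Z).
Qed.

End SideComponents.

Theorem lemma1 (R : realType) (V : finType) (E : {set {set V}})
  (HG : simple_graph E) (Hcactus : cactus E) (X Y : {set V}) :
  skeleton_adjacent (@CUT R V E) (cutvec R E X) (cutvec R E Y) ->
  (#|delta E (symdiff X Y)| <= 2)%N.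
Proof.
move=> adjXY; rewrite leqNgt; apply/negP.
move=> /card_gt2P[f1 [f2 [f3 [[d1 d2 d3] [n12 n23 n31]]]]].
have full a : delta E (side_comp E (symdiff X Y) a) = set0 \/
    delta E (side_comp E (symdiff X Y) a) = delta E (symdiff X Y).
  exact (delta_sub_symdiff HG adjXY (delta_side_comp_sub (a := a) HG)).
set Z := symdiff X Y in full d1 d2 d3.
have [z1 [w1 [z1Z w1Z a1 ef1]]] := delta_orient HG d1.
have [z2 [w2 [z2Z w2Z a2 ef2]]] := delta_orient HG d2.
have [z3 [w3 [z3Z w3Z a3 ef3]]] := delta_orient HG d3.
subst f1 f2 f3.
have [z1z2 w2w1] := crossing_edges_side_connect HG full z1Z w1Z a1 z2Z w2Z a2.
have [z1z3 w3w1] := crossing_edges_side_connect HG full z1Z w1Z a1 z3Z w3Z a3.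
have n13 : [set z1; w1] != [set z3; w3] by rewrite eq_sym.
have [s1 [cyc1 cross1]] := crossing_pair_cycle HG z1Z w1Z a1 a2 n12 z1z2 w2w1.
have [s2 [cyc2 cross2]] := crossing_pair_cycle HG z1Z w1Z a1 a3 n13 z1z3 w3w1.
have /setIP[in1 _] : [set z1; w1] \in cycle_edges s1 :&: delta E Z by rewrite cross1 set21.
have /setIP[in2 _] : [set z1; w1] \in cycle_edges s2 :&: delta E Z by rewrite cross2 set21.
have := set22 [set z1; w1] [set z2; w2].
rewrite -cross1 (Hcactus.2 _ a1 _ _ cyc1 cyc2 in1 in2) cross2 in_set2.
by rewrite eq_sym (negbTE n12) (negbTE n23).
Qed.
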